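(* Let $n\ge2$, $0<R<\sqrt{\tfrac38(3n-5)(2n-3)^3}$, let $u_0$ satisfy (C1)–(C6), and let $u$ be the solution of $(\ast)$. Then $u(\cdot,t)\to u^*$ uniformly in $B_R$ as $t\to\infty$, with an exponential rate: there are $c>0$ and $\mu>0$ such that $\sup_{x\in B_R}|u(x,t)-u^*(|x|)|\le c\,e^{-\mu t}$ for all $t\ge0$.
   Context: $B_R=\{x\in\mathbb R^n:|x|<R\}$; radially symmetric functions are written as functions of $r=|x|$ and $t$, $u_r$ is the radial derivative. $\alpha:=\sqrt[3]{9n-15}$, $u^*(r):=-\alpha r^{1/3}$, $\nu:=\tfrac16\sqrt{36n^2-96n+61}$. Conditions on $u_0$: (C1) $u_0\in C^2(\overline{B_R}\setminus\{0\})$; (C2) $u_0$ radially symmetric; (C3) $u^*\ge u_0$; (C4) $\limsup_{r\searrow0}|r^{\frac32-n-\nu}(u^*(r)-u_0(r))|<\infty$; (C5) $u_0(R)=u^*(R)$; (C6) there is $C>0$ with $0\ge u_{0r}(r)\ge -Cr^{-2/3}$ for all $r\in(0,R)$. Problem $(\ast)$: $u_t=\Delta u+uu_r^3$ in $(B_R\setminus\{0\})\times(0,\infty)$, $u(0,t)=0$, $u(R,t)=u^*(R)$ for $t>0$, $u(\cdot,0)=u_0$; it has a unique classical solution $u\in C(\overline{B_R}\times[0,\infty))\cap C^{2,1}((B_R\setminus\{0\})\times(0,\infty))$ with $u_r\le0$. *)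

(* classical real analysis. Radially symmetric functions are
   represented as functions of r = |x| (and t). *)
From Stdlib Require Import Reals Lra.
Open Scope R_scope.

Definition cbrt (x : R) : R := if Rle_dec x 0 then 0 else Rpower x (1/3).

Definition alpha (n : nat) : R := cbrt (9 * INR n - 15).

Definition ustar (n : nat) (r : R) : R := - alpha n * cbrt r.

Definition nu (n : nat) : R := / 6 * sqrt (36 * INR n ^ 2 - 96 * INR n + 61).

Definition cont2_on (D : R -> R -> Prop) (f : R -> R -> R) : Prop :=
  forall r t, D r t -> forall eps, 0 < eps -> exists delta, 0 < delta /\
    forall r' t', D r' t' -> Rabs (r' - r) < delta -> Rabs (t' - t) < delta ->
      Rabs (f r' t' - f r t) < eps.

Definition closed_cyl (Rad : R) (r t : R) : Prop := 0 <= r <= Rad /\ 0 <= t.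
Definition open_cyl (Rad : R) (r t : R) : Prop := 0 < r < Rad /\ 0 < t.

(* (cond_C1): u0 in C^2 of (0,Rad] (closure of B_R minus 0, radially), expressed as:
   u0 is the restriction to (0,Rad] of a C^2 function g on (0,oo), with first
   derivative d1 and second derivative d2. *)
Definition cond_C1 (Rad : R) (u0 d1 : R -> R) : Prop :=
  exists g d2 : R -> R,
    (forall r, 0 < r <= Rad -> g r = u0 r) /\
    (forall r, 0 < r -> derivable_pt_lim g r (d1 r)) /\
    (forall r, 0 < r -> derivable_pt_lim d1 r (d2 r)) /\
    (forall r, 0 < r -> continuity_pt d2 r).

Definition cond_C3 (n : nat) (Rad : R) (u0 : R -> R) : Prop :=
  forall r, 0 <= r <= Rad -> ustar n r >= u0 r.

Definition cond_C4 (n : nat) (u0 : R -> R) : Prop :=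
  exists M delta, 0 < delta /\ forall r, 0 < r < delta ->
    Rabs (Rpower r (3/2 - INR n - nu n) * (ustar n r - u0 r)) <= M.

Definition cond_C5 (n : nat) (Rad : R) (u0 : R -> R) : Prop := u0 Rad = ustar n Rad.

(* (cond_C6), with d1 the derivative u0_r from (cond_C1) *)
Definition cond_C6 (Rad : R) (d1 : R -> R) : Prop :=
  exists C, 0 < C /\ forall r, 0 < r < Rad ->
    0 >= d1 r /\ d1 r >= - C * Rpower r (- (2/3)).

(* u is a classical (radial) solution of ( * ) with u_r <= 0:
   u in C([0,Rad] x [0,oo)) and C^{2,1} in (0,Rad) x (0,oo), with radial
   derivatives ur, urr and time derivative ut, satisfying
   u_t = u_rr + (n-1)/r u_r + u u_r^3 (radial form of Laplacian). *)
Definition is_solution (n : nat) (Rad : R) (u0 : R -> R) (u : R -> R -> R) : Prop :=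
  cont2_on (closed_cyl Rad) u /\
  exists ur urr ut : R -> R -> R,
    (forall r t, open_cyl Rad r t ->
       derivable_pt_lim (fun s => u s t) r (ur r t) /\
       derivable_pt_lim (fun s => ur s t) r (urr r t) /\
       derivable_pt_lim (fun s => u r s) t (ut r t)) /\
    cont2_on (open_cyl Rad) ur /\
    cont2_on (open_cyl Rad) urr /\
    cont2_on (open_cyl Rad) ut /\
    (forall r t, open_cyl Rad r t ->
       ut r t = urr r t + (INR n - 1) / r * ur r t + u r t * (ur r t) ^ 3) /\
    (forall t, 0 < t -> u 0 t = 0) /\
    (forall t, 0 < t -> u Rad t = ustar n Rad) /\
    (forall r, 0 <= r <= Rad -> u r 0 = u0 r) /\
    (forall r t, open_cyl Rad r t -> ur r t <= 0).

(* Exponential convergence of u(.,t) to the singular steady state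
   u*(r) = - alpha r^(1/3), proved by comparison with explicit barriers for
   the radial equation  u_t = u_rr + (n-1)/r u_r + u u_r^3.

   1. A weak parabolic maximum principle on [0,Rad] x [0,T]: if z <= 0 on the
      parabolic boundary and z cannot have a positive interior maximum (where
      z_r = 0, z_rr <= 0 and z_t >= 0), then z <= 0.  It rests on the extreme
      value theorem on a compact rectangle (taken from MathComp-Analysis) and
      on the first- and second-order conditions at a one-sided maximum.
   2. The comparison principle: a subsolution stays below a supersolution as
      long as one of them is strictly decreasing in r, because at a touching
      point the difference of the nonlinear terms is (v - w) v_r^3 < 0.
   3. The barriers W_s(r) = u*(r) - s r^(1/6).  In the variable q = r^(1/6)
      the radial operator applied to W_s is an explicit rational function of
      q and s; by alpha^3 = 9n - 15 it vanishes for s = 0 (u* is a steady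
      state) and is at least s r^(1/6) / (36 r^2) for s >= 0.
   4. Hence u <= u*, and u >= W_(c exp(-mu t)) with mu = 1/(36 Rad^2), once
      W_c <= u0; such a c exists by the decay condition (C4) near r = 0 and the
      boundedness of u0 elsewhere.
   The theorem follows with rate mu and constant c Rad^(1/6).  The argument
   does not need (C1), (C5), (C6) nor the upper bound on Rad. *)
From Stdlib Require Import Reals Lra.
From mathcomp Require all_boot all_order all_algebra.
From mathcomp Require all_classical all_reals all_analysis.
From mathcomp Require Rstruct Rstruct_topology.
Open Scope R_scope.

Definition rect (a b c d r t : R) : Prop := a <= r <= b /\ c <= t <= d.

Module RectangleEVT.
Import all_boot all_order all_algebra.
Import all_classical all_reals all_analysis.
Import Rstruct Rstruct_topology.
Import Order.TTheory.
Local Open Scope classical_set_scope.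
Local Open Scope ring_scope.

Lemma rect_max (a b c d : R) (f : R -> R -> R) : Rle a b -> Rle c d ->
  cont2_on (rect a b c d) f ->
  exists r0 t0, rect a b c d r0 t0 /\
    forall r t, rect a b c d r t -> Rle (f r t) (f r0 t0).
Proof.
move=> /RleP ab /RleP cd cf.
pose A : set (R * R) := `[a, b] `*` `[c, d].
have cA : compact A by apply: compact_setX; exact: segment_compact.
have A0 : A !=set0 by exists (a, c); split => /=; rewrite in_itv /= ?lexx ?ab ?cd.
have fA : {within A, continuous (fun p => f p.1 p.2)}.
  apply/subspace_continuousP => -[x1 x2] [/=].
  rewrite !in_itv /= => /andP[/RleP h1 /RleP h2] /andP[/RleP h3 /RleP h4].
  rewrite /from_subspace /=; apply/cvg_ballP => e e0; rewrite near_withinE.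
  have [dl [/RltP dl0 Hd]] := cf x1 x2 (conj (conj h1 h2) (conj h3 h4)) e (elimT RltP e0).
  apply/nbhs_ballP; exists dl => //= -[y1 y2] [/= b1 b2] [/=].
  rewrite !in_itv /= => /andP[/RleP k1 /RleP k2] /andP[/RleP k3 /RleP k4].
  move: b1 b2; rewrite /ball /= -!RabsE => b1 b2.
  rewrite Rabs_minus_sym in b1; rewrite Rabs_minus_sym in b2.
  have := Hd y1 y2 (conj (conj k1 k2) (conj k3 k4)) (elimT RltP b1) (elimT RltP b2).
  by rewrite Rabs_minus_sym => /RltP.
have [[r0 t0] /=] := compact_EVT_max A0 cA fA.
rewrite inE => -[] /=; rewrite !in_itv /= => /andP[/RleP h1 /RleP h2] /andP[/RleP h3 /RleP h4] Hm.
exists r0, t0; split; first by split; split.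
move=> r t [[k1 k2] [k3 k4]]; apply/RleP; apply: (Hm (r, t)).
by rewrite inE; split; rewrite /= in_itv /=; apply/andP; split; apply/RleP.
Qed.

End RectangleEVT.

From Coquelicot Require Import Coquelicot.

Lemma derivable_pt_lim_local (f g : R -> R) x l d :
  0 < d -> (forall y, Rabs (y - x) < d -> f y = g y) ->
  derivable_pt_lim g x l -> derivable_pt_lim f x l.
Proof.
intros Hd Hfg Hg eps Heps.
destruct (Hg eps Heps) as [d1 Hd1].
assert (Hm : 0 < Rmin d d1) by (apply Rmin_pos; [lra | apply cond_pos]).
exists (mkposreal _ Hm). intros h Hh0 Hh. simpl in Hh.
pose proof (Rmin_l d d1); pose proof (Rmin_r d d1).
rewrite (Hfg (x + h)), (Hfg x).
- apply Hd1; auto; lra.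
- rewrite Rminus_diag, Rabs_R0; lra.
- replace (x + h - x) with h by ring. lra.
Qed.

Lemma deriv_nonpos_of_right_max (f : R -> R) x l d :
  derivable_pt_lim f x l -> 0 < d ->
  (forall h, 0 < h < d -> f (x + h) <= f x) -> l <= 0.
Proof.
intros Hf Hd Hmax. destruct (Rle_or_lt l 0) as [|Hl]; auto. exfalso.
destruct (Hf l Hl) as [d1 Hd1].
pose proof (Rmin_pos d d1 Hd (cond_pos d1)); pose proof (Rmin_l d d1); pose proof (Rmin_r d d1).
set (h := Rmin d d1 / 2).
assert (Hh : 0 < h /\ h < d /\ h < d1) by (unfold h; repeat split; lra).
specialize (Hd1 h ltac:(lra) ltac:(rewrite Rabs_pos_eq; lra)).
apply Rabs_def2 in Hd1.
assert (Hq : 0 < (f (x + h) - f x) / h) by lra.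
specialize (Hmax h ltac:(lra)).
assert (0 < f (x + h) - f x).
{ replace (f (x + h) - f x) with ((f (x + h) - f x) / h * h) by (field; lra).
  apply Rmult_lt_0_compat; lra. }
lra.
Qed.

(* First-order condition at a maximum from the left, by reflection x -> -x. *)
Lemma deriv_nonneg_of_left_max (f : R -> R) x l d :
  derivable_pt_lim f x l -> 0 < d ->
  (forall h, 0 < h < d -> f (x - h) <= f x) -> 0 <= l.
Proof.
intros Hf Hd Hmax.
assert (Hg : derivable_pt_lim (fun y => f (- y)) (- x) (- l)).
{ apply is_derive_Reals.
  replace (- l) with (scal (-1) l) by (unfold scal; simpl; unfold mult; simpl; ring).
  apply (is_derive_comp f Ropp).
  - rewrite Ropp_involutive. apply is_derive_Reals. exact Hf.
  - auto_derive; auto. }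
enough (- l <= 0) by lra.
apply (deriv_nonpos_of_right_max _ _ _ d Hg Hd). intros h Hh.
replace (- (- x + h)) with (x - h) by ring. rewrite Ropp_involutive. auto.
Qed.

(* Second-order condition: if f' (x) = 0 and x maximizes f on [x, x+d],
   then f''(x) <= 0 (otherwise f' > 0 just right of x and f increases). *)
Lemma deriv2_nonpos_of_right_max (f f' : R -> R) x l d :
  0 < d -> (forall y, x <= y <= x + d -> derivable_pt_lim f y (f' y)) ->
  f' x = 0 -> derivable_pt_lim f' x l ->
  (forall y, x <= y <= x + d -> f y <= f x) -> l <= 0.
Proof.
intros Hd Hf Hcrit Hl Hmax. destruct (Rle_or_lt l 0) as [|Hl0]; auto. exfalso.
destruct (Hl l Hl0) as [d1 Hd1].
pose proof (Rmin_pos d d1 Hd (cond_pos d1)); pose proof (Rmin_l d d1); pose proof (Rmin_r d d1).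
set (b := x + Rmin d d1 / 2).
assert (Hb : 0 < b - x /\ b <= x + d /\ b - x < d1) by (unfold b; repeat split; lra).
destruct (MVT_cor2 f f' x b ltac:(lra)) as [c [Hmvt Hc]].
{ intros c Hc. apply Hf. lra. }
specialize (Hd1 (c - x) ltac:(lra) ltac:(rewrite Rabs_pos_eq; lra)).
replace (x + (c - x)) with c in Hd1 by ring. rewrite Hcrit in Hd1.
apply Rabs_def2 in Hd1.
assert (0 < f' c).
{ replace (f' c) with ((f' c - 0) / (c - x) * (c - x)) by (field; lra).
  apply Rmult_lt_0_compat; lra. }
assert (0 < f b - f x) by (rewrite Hmvt; apply Rmult_lt_0_compat; lra).
specialize (Hmax b ltac:(lra)). lra.
Qed.

Definition radial_derivs (z zr zrr zt : R -> R -> R) (r t : R) : Prop :=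
  derivable_pt_lim (fun s => z s t) r (zr r t) /\
  derivable_pt_lim (fun s => zr s t) r (zrr r t) /\
  derivable_pt_lim (fun s => z r s) t (zt r t).

(* Weak maximum principle: at a positive maximum of z over [0,Rad] x [0,T],
   which lies in the parabolic interior, z_r = 0, z_rr <= 0 and z_t >= 0. *)
Lemma weak_max_principle (Rad T : R) (z zr zrr zt : R -> R -> R) :
  0 < Rad -> 0 <= T ->
  cont2_on (rect 0 Rad 0 T) z ->
  (forall r t, open_cyl Rad r t -> radial_derivs z zr zrr zt r t) ->
  (forall r, 0 <= r <= Rad -> z r 0 <= 0) ->
  (forall t, 0 < t <= T -> z 0 t <= 0 /\ z Rad t <= 0) ->
  (forall r t, open_cyl Rad r t -> 0 < z r t -> zr r t = 0 -> zrr r t <= 0 -> zt r t < 0) ->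
  forall r t, rect 0 Rad 0 T r t -> z r t <= 0.
Proof.
intros HR HT Hcont Hder Hinit Hlat Hint r t Hrt.
destruct (RectangleEVT.rect_max 0 Rad 0 T z ltac:(lra) HT Hcont)
  as [r0 [t0 [[Hr0 Ht0] Hmax]]].
destruct (Rle_or_lt (z r t) 0) as [|Hpos]; auto. exfalso.
assert (Hz0 : 0 < z r0 t0) by (pose proof (Hmax r t Hrt); lra).
assert (Ht0' : 0 < t0).
{ destruct (Req_dec t0 0) as [->|]; [|lra]. pose proof (Hinit r0 Hr0); lra. }
assert (Hr0' : 0 < r0 < Rad).
{ destruct (Req_dec r0 0) as [->|]; [pose proof (Hlat t0 ltac:(lra)); lra|].
  destruct (Req_dec r0 Rad) as [->|]; [pose proof (Hlat t0 ltac:(lra)); lra|].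
  lra. }
assert (Hopen : open_cyl Rad r0 t0) by (split; lra).
destruct (Hder r0 t0 Hopen) as [Dr [Drr Dt]].
assert (Zr : zr r0 t0 = 0).
{ apply Rle_antisym.
  - apply (deriv_nonpos_of_right_max (fun s => z s t0) r0 _ (Rad - r0) Dr); [lra|].
    intros h Hh. apply Hmax. split; lra.
  - apply (deriv_nonneg_of_left_max (fun s => z s t0) r0 _ r0 Dr); [lra|].
    intros h Hh. apply Hmax. split; lra. }
assert (Zrr : zrr r0 t0 <= 0).
{ apply (deriv2_nonpos_of_right_max (fun s => z s t0) (fun s => zr s t0) r0 _ ((Rad - r0) / 2));
    [lra | | exact Zr | exact Drr |].
  - intros y Hy. apply (Hder y t0). split; lra.
  - intros y Hy. apply Hmax. split; lra. }
assert (Zt : 0 <= zt r0 t0).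
{ apply (deriv_nonneg_of_left_max (fun s => z r0 s) t0 _ t0 Dt); [lra|].
  intros h Hh. apply Hmax. split; lra. }
pose proof (Hint r0 t0 Hopen Hz0 Zr Zrr). lra.
Qed.

Definition cont_at (f : R -> R) (x : R) : Prop :=
  forall eps, 0 < eps -> exists d, 0 < d /\
    forall y, Rabs (y - x) < d -> Rabs (f y - f x) < eps.

Lemma cont_at_of_derivable (f : R -> R) x l : derivable_pt_lim f x l -> cont_at f x.
Proof.
intros Hf eps Heps.
assert (Hc : continuity_pt f x) by (apply derivable_continuous_pt; exists l; exact Hf).
destruct (Hc eps Heps) as [d [Hd Hdd]].
exists d; split; [lra|]. intros y Hy.
destruct (Req_dec y x) as [->|Hne].
- rewrite Rminus_diag, Rabs_R0; lra.
- apply (Hdd y). split; [split; [exact I | auto] | exact Hy].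
Qed.

Lemma cont_at_const (k x : R) : cont_at (fun _ => k) x.
Proof.
intros eps Heps. exists 1; split; [lra|]. intros. rewrite Rminus_diag, Rabs_R0; lra.
Qed.

(* The power r^a (a > 0), extended by 0 on r <= 0, is continuous everywhere;
   at 0 because r^a < eps for 0 < r < eps^(1/a). *)
Lemma cont_at_power_ext (a : R) : 0 < a ->
  forall x, cont_at (fun r => if Rle_dec r 0 then 0 else Rpower r a) x.
Proof.
intros Ha x eps Heps.
destruct (Rlt_or_le x 0) as [Hx|Hx].
- exists (- x); split; [lra|]. intros y Hy. apply Rabs_def2 in Hy.
  destruct (Rle_dec y 0); [|lra]. destruct (Rle_dec x 0); [|lra].
  rewrite Rminus_diag, Rabs_R0; lra.
- destruct (Rle_lt_or_eq_dec 0 x Hx) as [Hx0|<-].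
  + destruct (cont_at_of_derivable _ _ _ (derivable_pt_lim_power x a Hx0) eps Heps)
      as [d [Hd Hpow]].
    exists (Rmin d x); split; [apply Rmin_pos; lra|]. intros y Hy.
    pose proof (Rmin_l d x); pose proof (Rmin_r d x). apply Rabs_def2 in Hy as Hy'.
    destruct (Rle_dec y 0); [lra|]. destruct (Rle_dec x 0); [lra|].
    apply Hpow. lra.
  + exists (Rpower eps (/ a)); split; [apply exp_pos|]. intros y Hy.
    rewrite Rminus_0_r in Hy.
    destruct (Rle_dec 0 0) as [_|]; [|lra]. rewrite Rminus_0_r.
    destruct (Rle_dec y 0); [rewrite Rabs_R0; lra|].
    assert (0 < Rpower y a) by apply exp_pos.
    rewrite Rabs_pos_eq by lra. apply Rabs_def2 in Hy.
    replace eps with (Rpower (Rpower eps (/ a)) a)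
      by (rewrite Rpower_mult, Rinv_l by lra; apply Rpower_1; lra).
    apply Rlt_Rpower_l; lra.
Qed.

Lemma cont2_of_r (D : R -> R -> Prop) (g : R -> R) :
  (forall r, cont_at g r) -> cont2_on D (fun r t => g r).
Proof.
intros Hg r t _ eps Heps. destruct (Hg r eps Heps) as [d [Hd H]]. exists d; auto.
Qed.

Lemma cont2_of_t (D : R -> R -> Prop) (g : R -> R) :
  (forall t, cont_at g t) -> cont2_on D (fun r t => g t).
Proof.
intros Hg r t _ eps Heps. destruct (Hg t eps Heps) as [d [Hd H]]. exists d; auto.
Qed.

Lemma cont2_subdomain (D D' : R -> R -> Prop) (f : R -> R -> R) :
  (forall r t, D' r t -> D r t) -> cont2_on D f -> cont2_on D' f.
Proof.
intros Hsub Hf r t Hrt eps Heps.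
destruct (Hf r t (Hsub _ _ Hrt) eps Heps) as [d [Hd H]]. exists d; auto.
Qed.

Lemma cont2_minus (D : R -> R -> Prop) (f g : R -> R -> R) :
  cont2_on D f -> cont2_on D g -> cont2_on D (fun r t => f r t - g r t).
Proof.
intros Hf Hg r t Hrt eps Heps.
destruct (Hf r t Hrt (eps / 2) ltac:(lra)) as [d1 [Hd1 H1]].
destruct (Hg r t Hrt (eps / 2) ltac:(lra)) as [d2 [Hd2 H2]].
exists (Rmin d1 d2); split; [apply Rmin_pos; auto|].
intros r' t' HD Hr Ht. pose proof (Rmin_l d1 d2); pose proof (Rmin_r d1 d2).
specialize (H1 r' t' HD ltac:(lra) ltac:(lra)). specialize (H2 r' t' HD ltac:(lra) ltac:(lra)).
replace (f r' t' - g r' t' - (f r t - g r t)) with ((f r' t' - f r t) - (g r' t' - g r t))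
  by ring.
eapply Rle_lt_trans; [apply Rabs_triang|]. rewrite Rabs_Ropp. lra.
Qed.

(* Product rule for continuity: |f'g' - fg| <= |f'-f||g'-g| + |f||g'-g| + |g||f'-f|. *)
Lemma cont2_mult (D : R -> R -> Prop) (f g : R -> R -> R) :
  cont2_on D f -> cont2_on D g -> cont2_on D (fun r t => f r t * g r t).
Proof.
intros Hf Hg r t Hrt eps Heps.
set (K := 1 + Rabs (f r t) + Rabs (g r t)).
pose proof (Rabs_pos (f r t)); pose proof (Rabs_pos (g r t)).
assert (HK : 1 <= K) by (unfold K; lra).
set (e := Rmin 1 (eps / K)).
assert (He : 0 < e) by (apply Rmin_pos; [lra | apply Rdiv_lt_0_compat; lra]).
assert (He1 : e <= 1) by apply Rmin_l.
assert (HeK : e * K <= eps).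
{ apply Rle_trans with (eps / K * K).
  - apply Rmult_le_compat_r; [lra | apply Rmin_r].
  - right; field; lra. }
destruct (Hf r t Hrt e He) as [d1 [Hd1 H1]].
destruct (Hg r t Hrt e He) as [d2 [Hd2 H2]].
exists (Rmin d1 d2); split; [apply Rmin_pos; auto|].
intros r' t' HD Hr Ht. pose proof (Rmin_l d1 d2); pose proof (Rmin_r d1 d2).
specialize (H1 r' t' HD ltac:(lra) ltac:(lra)). specialize (H2 r' t' HD ltac:(lra) ltac:(lra)).
set (a := f r' t' - f r t) in *. set (b := g r' t' - g r t) in *.
replace (f r' t' * g r' t' - f r t * g r t) with (a * b + f r t * b + g r t * a)
  by (unfold a, b; ring).
assert (Htri : Rabs (a * b + f r t * b + g r t * a)
               <= Rabs a * Rabs b + Rabs (f r t) * Rabs b + Rabs (g r t) * Rabs a).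
{ rewrite <- !Rabs_mult. eapply Rle_trans; [apply Rabs_triang|].
  pose proof (Rabs_triang (a * b) (f r t * b)). lra. }
pose proof (Rabs_pos a); pose proof (Rabs_pos b).
assert (Rabs a * Rabs b <= e * Rabs b) by (apply Rmult_le_compat_r; lra).
assert (e * Rabs b < e * e) by (apply Rmult_lt_compat_l; lra).
assert (Rabs (f r t) * Rabs b <= Rabs (f r t) * e) by (apply Rmult_le_compat_l; lra).
assert (Rabs (g r t) * Rabs a <= Rabs (g r t) * e) by (apply Rmult_le_compat_l; lra).
assert (e * e <= e * 1) by (apply Rmult_le_compat_l; lra).
assert (e * K = e * 1 + Rabs (f r t) * e + Rabs (g r t) * e) by (unfold K; ring).
lra.
Qed.

Definition radial_op (n : nat) (r w wr wrr : R) : R :=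
  wrr + (INR n - 1) / r * wr + w * wr ^ 3.

(* At a positive maximum of v - w the
   gradients agree, so the nonlinear terms differ by (v - w) v_r^3 < 0. *)
Lemma comparison_principle (n : nat) (Rad T : R)
    (v vr vrr vt w wr wrr wt : R -> R -> R) :
  0 < Rad -> 0 <= T ->
  cont2_on (rect 0 Rad 0 T) v -> cont2_on (rect 0 Rad 0 T) w ->
  (forall r t, open_cyl Rad r t -> radial_derivs v vr vrr vt r t) ->
  (forall r t, open_cyl Rad r t -> radial_derivs w wr wrr wt r t) ->
  (forall r t, open_cyl Rad r t -> vt r t <= radial_op n r (v r t) (vr r t) (vrr r t)) ->
  (forall r t, open_cyl Rad r t -> radial_op n r (w r t) (wr r t) (wrr r t) <= wt r t) ->
  (forall r t, open_cyl Rad r t -> vr r t < 0 \/ wr r t < 0) ->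
  (forall r, 0 <= r <= Rad -> v r 0 <= w r 0) ->
  (forall t, 0 < t <= T -> v 0 t <= w 0 t /\ v Rad t <= w Rad t) ->
  forall r t, rect 0 Rad 0 T r t -> v r t <= w r t.
Proof.
intros HR HT Hv Hw Dv Dw Hsub Hsuper Hdecr Hinit Hlat r t Hrt.
enough (v r t - w r t <= 0) by lra.
apply (weak_max_principle Rad T (fun r t => v r t - w r t)
         (fun r t => vr r t - wr r t) (fun r t => vrr r t - wrr r t)
         (fun r t => vt r t - wt r t)); auto.
- apply cont2_minus; auto.
- intros r' t' Hopen.
  destruct (Dv r' t' Hopen) as [Vr [Vrr Vt]]. destruct (Dw r' t' Hopen) as [Wr [Wrr Wt]].
  repeat split; apply derivable_pt_lim_minus; auto.
- intros r' Hr'. pose proof (Hinit r' Hr'). lra.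
- intros t' Ht'. pose proof (Hlat t' Ht'). lra.
- intros r' t' Hopen Hpos Hgrad Hcurv.
  pose proof (Hsub r' t' Hopen); pose proof (Hsuper r' t' Hopen).
  assert (Hp : vr r' t' < 0) by (destruct (Hdecr r' t' Hopen); lra).
  assert (Hcube : 0 < (- vr r' t') ^ 3) by (apply pow_lt; lra).
  assert (Hnl : (v r' t' - w r' t') * (- vr r' t') ^ 3 > 0) by (apply Rmult_lt_0_compat; lra).
  assert (Hdiff : radial_op n r' (v r' t') (vr r' t') (vrr r' t')
                  - radial_op n r' (w r' t') (wr r' t') (wrr r' t')
                  = (vrr r' t' - wrr r' t') - (v r' t' - w r' t') * (- vr r' t') ^ 3).
  { replace (wr r' t') with (vr r' t') by lra. unfold radial_op. ring. }
  lra.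
Qed.

(* The sixth root q = r^(1/6): barriers are polynomials in q, and
   u*(r) = - alpha q^2.  root6_ext is its continuous extension by 0. *)
Definition root6 (r : R) : R := Rpower r (1/6).
Definition root6_ext (r : R) : R := if Rle_dec r 0 then 0 else Rpower r (1/6).

Lemma root6_pos (r : R) : 0 < root6 r.
Proof. apply exp_pos. Qed.

Lemma Rpower_root6 (r : R) (k : nat) : 0 < r -> Rpower r (INR k / 6) = root6 r ^ k.
Proof.
intros Hr. unfold root6. rewrite <- Rpower_pow by apply exp_pos.
rewrite Rpower_mult. f_equal. field.
Qed.

Lemma root6_pow6 (r : R) : 0 < r -> root6 r ^ 6 = r.
Proof.
intros Hr. rewrite <- Rpower_root6 by auto.
replace (INR 6 / 6) with 1 by (simpl; field). apply Rpower_1; auto.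
Qed.

Lemma cbrt_root6 (r : R) : 0 < r -> cbrt r = root6 r ^ 2.
Proof.
intros Hr. unfold cbrt. destruct (Rle_dec r 0); [lra|].
rewrite <- Rpower_root6 by auto. f_equal. simpl; field.
Qed.

Lemma root6_ext_pos (r : R) : 0 < r -> root6_ext r = root6 r.
Proof. intros Hr. unfold root6_ext, root6. destruct (Rle_dec r 0); [lra | auto]. Qed.

Lemma root6_ext_nonneg (r : R) : 0 <= root6_ext r.
Proof. unfold root6_ext. destruct (Rle_dec r 0); [lra | left; apply exp_pos]. Qed.

Lemma root6_ext_0 : root6_ext 0 = 0.
Proof. unfold root6_ext. destruct (Rle_dec 0 0); [auto | lra]. Qed.

Lemma root6_ext_le (r Rad : R) : 0 <= r <= Rad -> 0 < Rad -> root6_ext r <= root6 Rad.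
Proof.
intros Hr HR. destruct (Req_dec r 0) as [->|Hr0].
- rewrite root6_ext_0. left; apply root6_pos.
- rewrite root6_ext_pos by lra. apply Rle_Rpower_l; lra.
Qed.

Lemma root6_deriv (r : R) : 0 < r -> derivable_pt_lim root6 r (/ (6 * root6 r ^ 5)).
Proof.
intros Hr. unfold root6 at 1.
replace (/ (6 * root6 r ^ 5)) with (1/6 * Rpower r (1/6 - 1)).
- apply derivable_pt_lim_power; auto.
- replace (1/6 - 1) with (1/6 + - (1)) by ring.
  rewrite Rpower_plus, Rpower_Ropp, Rpower_1 by auto. fold (root6 r).
  rewrite <- (root6_pow6 r) at 2 by auto. pose proof (root6_pos r). field. lra.
Qed.

(* alpha > 0 and alpha^3 = 9n - 15, the relation that makes u* stationary. *)
Lemma alpha_facts (n : nat) : (2 <= n)%nat -> 0 < alpha n /\ alpha n ^ 3 = 9 * INR n - 15.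
Proof.
intros Hn. apply le_INR in Hn. simpl in Hn.
unfold alpha, cbrt. destruct (Rle_dec (9 * INR n - 15) 0); [lra|].
split; [apply exp_pos|].
rewrite <- Rpower_pow by apply exp_pos. rewrite Rpower_mult.
replace (1/3 * INR 3) with 1 by (simpl; field). apply Rpower_1; lra.
Qed.

Lemma ustar_0 (n : nat) : ustar n 0 = 0.
Proof. unfold ustar, cbrt. destruct (Rle_dec 0 0); [ring | lra]. Qed.

Lemma ustar_nonpos (n : nat) (r : R) : (2 <= n)%nat -> ustar n r <= 0.
Proof.
intros Hn. destruct (alpha_facts n Hn) as [Ha _]. unfold ustar, cbrt.
destruct (Rle_dec r 0); [lra|]. pose proof (exp_pos (1/3 * ln r)). unfold Rpower. nra.
Qed.

Lemma cont_at_ustar (n : nat) (r : R) : cont_at (ustar n) r.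
Proof.
intros eps Heps.
destruct (cont2_mult (fun _ _ => True) (fun _ _ => - alpha n) (fun r _ => cbrt r)
            (cont2_of_r _ _ (cont_at_const (- alpha n)))
            (cont2_of_r _ _ (cont_at_power_ext (1/3) ltac:(lra))) r 0 I eps Heps)
  as [d [Hd H]].
exists d; split; auto. intros y Hy. apply (H y 0 I Hy). rewrite Rminus_diag, Rabs_R0; lra.
Qed.

Definition barrier (n : nat) (s r : R) : R := ustar n r - s * root6_ext r.
Definition barrier_r (n : nat) (s r : R) : R :=
  - (2 * alpha n * root6 r + s) / (6 * root6 r ^ 5).
Definition barrier_rr (n : nat) (s r : R) : R :=
  (8 * alpha n * root6 r + 5 * s) / (36 * root6 r ^ 11).

Lemma barrier_in_root6 (n : nat) (s r : R) : 0 < r ->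
  barrier n s r = - alpha n * root6 r ^ 2 - s * root6 r.
Proof. intros Hr. unfold barrier, ustar. rewrite cbrt_root6, root6_ext_pos by auto. ring. Qed.

Lemma barrier_deriv (n : nat) (s r : R) : 0 < r ->
  derivable_pt_lim (barrier n s) r (barrier_r n s r).
Proof.
intros Hr. pose proof (root6_pos r) as Hq.
apply (derivable_pt_lim_local _ (fun y => - alpha n * root6 y ^ 2 - s * root6 y) r _ r Hr).
{ intros y Hy. apply Rabs_def2 in Hy. apply barrier_in_root6. lra. }
assert (Hpoly : derivable_pt_lim (fun q => - alpha n * q ^ 2 - s * q) (root6 r)
                  (- alpha n * 2 * root6 r - s)).
{ apply is_derive_Reals. auto_derive; auto. ring. }
pose proof (derivable_pt_lim_comp root6 _ r _ _ (root6_deriv r Hr) Hpoly) as Hcomp.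
unfold comp in Hcomp. unfold barrier_r.
replace (- (2 * alpha n * root6 r + s) / (6 * root6 r ^ 5))
  with ((- alpha n * 2 * root6 r - s) * / (6 * root6 r ^ 5)) by (field; lra).
exact Hcomp.
Qed.

Lemma barrier_r_deriv (n : nat) (s r : R) : 0 < r ->
  derivable_pt_lim (barrier_r n s) r (barrier_rr n s r).
Proof.
intros Hr. pose proof (root6_pos r) as Hq.
assert (Hrat : derivable_pt_lim (fun q => - (2 * alpha n * q + s) / (6 * q ^ 5)) (root6 r)
                 ((8 * alpha n * root6 r + 5 * s) / (6 * root6 r ^ 6))).
{ apply is_derive_Reals. auto_derive.
  - repeat split; auto. apply Rgt_not_eq. unfold Rgt. repeat apply Rmult_lt_0_compat; lra.
  - field. lra. }
pose proof (derivable_pt_lim_comp root6 _ r _ _ (root6_deriv r Hr) Hrat) as Hcomp.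
unfold comp in Hcomp. unfold barrier_rr.
replace ((8 * alpha n * root6 r + 5 * s) / (36 * root6 r ^ 11))
  with ((8 * alpha n * root6 r + 5 * s) / (6 * root6 r ^ 6) * / (6 * root6 r ^ 5))
  by (field; lra).
exact Hcomp.
Qed.

Lemma barrier_r_neg (n : nat) (s r : R) : (2 <= n)%nat -> 0 <= s ->
  barrier_r n s r < 0.
Proof.
intros Hn Hs. destruct (alpha_facts n Hn) as [Ha _]. pose proof (root6_pos r) as Hq.
unfold barrier_r, Rdiv.
assert (0 < (2 * alpha n * root6 r + s) * / (6 * root6 r ^ 5)).
{ apply Rmult_lt_0_compat; [nra|].
  apply Rinv_0_lt_compat, Rmult_lt_0_compat; [lra | apply pow_lt; lra]. }
lra.
Qed.

(* The radial operator on W_s, computed in q = r^(1/6) with alpha^3 = 9n - 15. *)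
Lemma barrier_residual (n : nat) (s r : R) : (2 <= n)%nat -> 0 < r ->
  let q := root6 r in let a := alpha n in
  radial_op n r (barrier n s r) (barrier_r n s r) (barrier_rr n s r)
  = (s * q ^ 3 * (16 * a ^ 3 + 6) + 18 * a ^ 2 * q ^ 2 * s ^ 2 + 7 * a * q * s ^ 3 + s ^ 4)
    / (216 * q ^ 14).
Proof.
intros Hn Hr q a. destruct (alpha_facts n Hn) as [_ Ha3]. fold a in Ha3.
pose proof (root6_pos r) as Hq. fold q in Hq.
rewrite barrier_in_root6 by auto. unfold radial_op, barrier_r, barrier_rr. fold q a.
replace r with (q ^ 6) by (apply root6_pow6; auto).
replace (INR n) with ((a ^ 3 + 15) / 9) by lra.
field. lra.
Qed.

Lemma ustar_steady (n : nat) (r : R) : (2 <= n)%nat -> 0 < r ->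
  radial_op n r (ustar n r) (barrier_r n 0 r) (barrier_rr n 0 r) = 0.
Proof.
intros Hn Hr. pose proof (barrier_residual n 0 r Hn Hr) as Hres. simpl in Hres.
replace (ustar n r) with (barrier n 0 r) by (unfold barrier; ring).
rewrite Hres. pose proof (root6_pos r). field. lra.
Qed.

Lemma ustar_deriv (n : nat) (r : R) : 0 < r ->
  derivable_pt_lim (ustar n) r (barrier_r n 0 r).
Proof.
intros Hr. apply (derivable_pt_lim_local _ (barrier n 0) r _ 1); [lra | | exact (barrier_deriv n 0 r Hr)].
intros y _. unfold barrier. ring.
Qed.

Lemma barrier_residual_lower (n : nat) (s r : R) : (2 <= n)%nat -> 0 <= s -> 0 < r ->
  s * root6 r / (36 * r ^ 2)
  <= radial_op n r (barrier n s r) (barrier_r n s r) (barrier_rr n s r).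
Proof.
intros Hn Hs Hr. rewrite (barrier_residual n s r Hn Hr).
destruct (alpha_facts n Hn) as [Ha _].
set (q := root6 r). set (a := alpha n) in *.
assert (Hq : 0 < q) by apply root6_pos.
assert (Hr12 : r ^ 2 = q ^ 12) by (unfold q; rewrite <- (root6_pow6 r) at 1 by auto; ring).
rewrite Hr12.
assert (Hq14 : 0 < 216 * q ^ 14) by (apply Rmult_lt_0_compat; [lra | apply pow_lt; lra]).
replace (s * q / (36 * q ^ 12)) with ((6 * s * q ^ 3) / (216 * q ^ 14)) by (field; lra).
apply Rmult_le_compat_r; [left; apply Rinv_0_lt_compat; lra|].
assert (0 <= 18 * a ^ 2 * q ^ 2 * s ^ 2 + 7 * a * q * s ^ 3 + s ^ 4).
{ assert (0 <= a ^ 2 * q ^ 2 * s ^ 2) by (rewrite <- !Rpow_mult_distr; apply pow2_ge_0).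
  assert (0 <= a * q * s ^ 3) by (apply Rmult_le_pos; [apply Rmult_le_pos | apply pow_le]; lra).
  assert (0 <= s ^ 4) by (apply pow_le; lra). lra. }
assert (0 <= s * q ^ 3 * a ^ 3) by (apply Rmult_le_pos; [apply Rmult_le_pos; [lra | apply pow_le; lra] | apply pow_le; lra]).
lra.
Qed.

(* u <= u*: the steady state u* is a supersolution which is strictly
   decreasing in r and dominates u0 (C3) and the boundary data. *)
Lemma solution_below_ustar (n : nat) (Rad : R) (u0 : R -> R) (u : R -> R -> R) :
  (2 <= n)%nat -> 0 < Rad -> is_solution n Rad u0 u -> cond_C3 n Rad u0 ->
  forall r t, 0 <= r <= Rad -> 0 <= t -> u r t <= ustar n r.
Proof.
intros Hn HR Hsol HC3 r t Hr Ht.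
destruct Hsol as [Hcont [ur [urr [ut [Hder [_ [_ [_ [Heq [Hu0t [HuR [Hinit _]]]]]]]]]]]].
apply (comparison_principle n Rad t u ur urr ut (fun r _ => ustar n r)
         (fun r _ => barrier_r n 0 r) (fun r _ => barrier_rr n 0 r) (fun _ _ => 0));
  auto; [| | | | | | | | repeat split; lra].
- apply (cont2_subdomain (closed_cyl Rad)); auto. intros r' t' [? ?]; repeat split; lra.
- apply cont2_of_r, cont_at_ustar.
- intros r' t' [Hr' _]. split; [|split].
  + apply ustar_deriv; lra.
  + apply barrier_r_deriv; lra.
  + apply derivable_pt_lim_const.
- intros r' t' Hopen. right. exact (Heq r' t' Hopen).
- intros r' t' [Hr' _]. rewrite ustar_steady by (auto; lra). lra.
- intros r' t' _. right. apply barrier_r_neg; auto; lra.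
- intros r' Hr'. rewrite Hinit by auto. apply Rge_le, HC3; auto.
- intros t' Ht'. rewrite Hu0t, HuR, ustar_0 by lra. lra.
Qed.

Definition decay_rate (Rad : R) : R := 1 / (36 * Rad ^ 2).

Lemma decay_rate_pos (Rad : R) : 0 < Rad -> 0 < decay_rate Rad.
Proof.
intros HR. unfold decay_rate.
apply Rdiv_lt_0_compat; [lra | apply Rmult_lt_0_compat; [lra | apply pow_lt; lra]].
Qed.

Lemma decay_rate_le (Rad r : R) : 0 < r <= Rad -> decay_rate Rad <= 1 / (36 * r ^ 2).
Proof.
intros Hr. unfold decay_rate. apply Rmult_le_compat_l; [lra|].
apply Rinv_le_contravar; [apply Rmult_lt_0_compat; [lra | apply pow_lt; lra]|].
apply Rmult_le_compat_l; [lra|]. apply pow_incr; lra.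
Qed.

(* u >= W_(c exp(-mu t)) with mu = decay_rate Rad, as soon as W_c <= u0:
   the time derivative mu S r^(1/6) of this barrier is dominated by the
   residual S r^(1/6) / (36 r^2) because r <= Rad. *)
Lemma solution_above_barrier (n : nat) (Rad c : R) (u0 : R -> R) (u : R -> R -> R) :
  (2 <= n)%nat -> 0 < Rad -> is_solution n Rad u0 u -> 0 <= c ->
  (forall r, 0 <= r <= Rad -> barrier n c r <= u0 r) ->
  forall r t, 0 <= r <= Rad -> 0 <= t ->
    barrier n (c * exp (- decay_rate Rad * t)) r <= u r t.
Proof.
intros Hn HR Hsol Hc Hgap r t Hr Ht.
destruct Hsol as [Hcont [ur [urr [ut [Hder [_ [_ [_ [Heq [Hu0t [HuR [Hinit _]]]]]]]]]]]].
set (mu := decay_rate Rad).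
set (S := fun t => c * exp (- mu * t)).
assert (HS : forall s, 0 <= S s) by (intros s; unfold S; pose proof (exp_pos (- mu * s)); nra).
assert (HSt : forall t, derivable_pt_lim S t (- mu * S t))
  by (intros; unfold S; apply is_derive_Reals; auto_derive; auto; ring).
apply (comparison_principle n Rad t (fun r t => barrier n (S t) r)
         (fun r t => barrier_r n (S t) r) (fun r t => barrier_rr n (S t) r)
         (fun r t => mu * S t * root6_ext r) u ur urr ut);
  auto; [| | | | | | | | repeat split; lra].
- apply cont2_minus; [apply cont2_of_r, cont_at_ustar|].
  apply cont2_mult; [apply cont2_of_t | apply cont2_of_r].
  + intros t'. exact (cont_at_of_derivable _ _ _ (HSt t')).
  + exact (cont_at_power_ext (1/6) ltac:(lra)).
- apply (cont2_subdomain (closed_cyl Rad)); auto. intros r' t' [? ?]; repeat split; lra.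
- intros r' t' [Hr' _]. split; [|split].
  + apply barrier_deriv; lra.
  + apply barrier_r_deriv; lra.
  + unfold barrier. replace (mu * S t' * root6_ext r') with (0 - (- mu * S t') * root6_ext r')
      by ring.
    apply derivable_pt_lim_minus; [apply derivable_pt_lim_const|].
    apply (derivable_pt_lim_scal_right S t' (- mu * S t') (root6_ext r') (HSt t')).
- intros r' t' [Hr' _].
  eapply Rle_trans; [|apply barrier_residual_lower; auto; lra].
  rewrite root6_ext_pos by lra.
  pose proof (decay_rate_le Rad r' ltac:(lra)).
  pose proof (Rmult_le_pos _ _ (HS t') (Rlt_le _ _ (root6_pos r'))).
  replace (S t' * root6 r' / (36 * r' ^ 2)) with (1 / (36 * r' ^ 2) * (S t' * root6 r'))
    by (field; lra).
  replace (mu * S t' * root6 r') with (mu * (S t' * root6 r')) by ring.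
  apply Rmult_le_compat_r; auto.
- intros r' t' Hopen. right. symmetry. exact (Heq r' t' Hopen).
- intros r' t' [Hr' _]. left. apply barrier_r_neg; auto.
- intros r' Hr'. rewrite Hinit by auto. unfold S.
  rewrite Rmult_0_r, exp_0, Rmult_1_r. auto.
- intros t' Ht'. rewrite Hu0t, HuR by lra. unfold barrier.
  rewrite ustar_0, root6_ext_0. split; [lra|]. pose proof (Rmult_le_pos _ _ (HS t') (root6_ext_nonneg Rad)). lra.
Qed.

(* u0 vanishes at the origin, by continuity of u at (0,0) and u(0,t) = 0. *)
Lemma initial_datum_at_origin (n : nat) (Rad : R) (u0 : R -> R) (u : R -> R -> R) :
  0 < Rad -> is_solution n Rad u0 u -> u0 0 = 0.
Proof.
intros HR [Hcont [_ [_ [_ [_ [_ [_ [_ [_ [Hu0t [_ [Hinit _]]]]]]]]]]]].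
rewrite <- (Hinit 0) by lra.
destruct (Req_dec (u 0 0) 0) as [|Hne]; auto. exfalso.
assert (Hp : 0 < Rabs (u 0 0)) by (apply Rabs_pos_lt; auto).
destruct (Hcont 0 0 ltac:(unfold closed_cyl; lra) _ Hp) as [d [Hd H]].
specialize (H 0 (d / 2) ltac:(unfold closed_cyl; lra)
  ltac:(rewrite Rminus_diag, Rabs_R0; lra) ltac:(rewrite Rminus_0_r, Rabs_pos_eq; lra)).
rewrite Hu0t in H by lra. rewrite Rminus_0_l, Rabs_Ropp in H. lra.
Qed.

Lemma initial_datum_bounded_below (n : nat) (Rad : R) (u0 : R -> R) (u : R -> R -> R) :
  0 < Rad -> is_solution n Rad u0 u ->
  exists m, forall r, 0 <= r <= Rad -> - m <= u0 r.
Proof.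
intros HR [Hcont [_ [_ [_ [_ [_ [_ [_ [_ [_ [_ [Hinit _]]]]]]]]]]]].
assert (Hneg : cont2_on (rect 0 Rad 0 0) (fun r t => 0 - u r t)).
{ apply cont2_minus; [apply cont2_of_r, cont_at_const|].
  apply (cont2_subdomain (closed_cyl Rad)); auto. intros r t [? ?]; repeat split; lra. }
destruct (RectangleEVT.rect_max 0 Rad 0 0 _ ltac:(lra) ltac:(lra) Hneg) as [r0 [t0 [_ Hmax]]].
exists (0 - u r0 t0). intros r Hr. rewrite <- (Hinit r Hr).
pose proof (Hmax r 0 ltac:(repeat split; lra)). lra.
Qed.

Lemma Rpower_antimono_small_base (r a b : R) : 0 < r < 1 -> b <= a -> Rpower r a <= Rpower r b.
Proof.
intros Hr Hab. unfold Rpower.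
assert (ln r < 0) by (rewrite <- ln_1; apply ln_increasing; lra).
assert (Hexp : a * ln r <= b * ln r) by nra.
destruct Hexp as [Hlt|Heq].
- left. apply exp_increasing. exact Hlt.
- rewrite Heq. lra.
Qed.

(* (C4) near the origin: the gap u* - u0 is O(r^(n + nu - 3/2)), hence
   O(r^(1/6)) since n + nu - 3/2 >= 1/2. *)
Lemma C4_gap_near_origin (n : nat) (u0 : R -> R) : (2 <= n)%nat -> cond_C4 n u0 ->
  exists K d, 0 <= K /\ 0 < d <= 1 /\
    forall r, 0 < r < d -> ustar n r - u0 r <= K * root6 r.
Proof.
intros Hn [M [d [Hd HM]]].
exists (Rabs M), (Rmin d 1).
pose proof (Rmin_l d 1); pose proof (Rmin_r d 1); pose proof (Rmin_pos d 1 Hd Rlt_0_1).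
split; [apply Rabs_pos | split; [split; lra|]].
intros r Hr. set (e := 3 / 2 - INR n - nu n).
specialize (HM r ltac:(lra)). fold e in HM.
assert (Hpe : 0 < Rpower r e) by apply exp_pos.
destruct (Rle_or_lt (ustar n r - u0 r) 0) as [Hgap|Hgap].
{ pose proof (Rabs_pos M); pose proof (root6_pos r). nra. }
rewrite Rabs_pos_eq in HM by (apply Rmult_le_pos; lra).
assert (Hgap_bound : ustar n r - u0 r <= M * Rpower r (- e)).
{ rewrite Rpower_Ropp. apply Rmult_le_reg_l with (Rpower r e); auto.
  replace (Rpower r e * (M * / Rpower r e)) with M by (field; lra). lra. }
assert (Hexp : Rpower r (- e) <= root6 r).
{ apply Rpower_antimono_small_base; [lra|].
  unfold e. assert (0 <= nu n) by (unfold nu; apply Rmult_le_pos; [lra | apply sqrt_pos]).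
  apply le_INR in Hn. simpl in Hn. lra. }
assert (0 < Rpower r (- e)) by apply exp_pos.
assert (M * Rpower r (- e) <= Rabs M * Rpower r (- e)) by (apply Rmult_le_compat_r; [lra | apply Rle_abs]).
assert (Rabs M * Rpower r (- e) <= Rabs M * root6 r) by (apply Rmult_le_compat_l; [apply Rabs_pos | lra]).
lra.
Qed.

(* Some barrier W_c lies below u0: near 0 by (C4), and on [d,Rad] because
   u0 >= -m, u* <= 0 and r^(1/6) >= d^(1/6) there. *)
Lemma initial_barrier (n : nat) (Rad : R) (u0 : R -> R) : (2 <= n)%nat ->
  u0 0 = 0 -> (exists m, forall r, 0 <= r <= Rad -> - m <= u0 r) -> cond_C4 n u0 ->
  exists c, 0 < c /\ forall r, 0 <= r <= Rad -> barrier n c r <= u0 r.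
Proof.
intros Hn Hu00 [m Hm] HC4.
destruct (C4_gap_near_origin n u0 Hn HC4) as [K [d [HK [Hd Hnear]]]].
pose proof (root6_pos d) as Hqd.
set (m' := Rmax m 0).
assert (Hm' : 0 <= m' /\ m <= m') by (split; [apply Rmax_r | apply Rmax_l]).
exists (K + m' / root6 d + 1).
assert (0 <= m' / root6 d) by (apply Rdiv_le_0_compat; lra).
split; [lra|]. intros r Hr. unfold barrier.
destruct (Req_dec r 0) as [->|Hr0].
{ rewrite Hu00, ustar_0, root6_ext_0. lra. }
rewrite root6_ext_pos by lra. pose proof (root6_pos r) as Hqr.
destruct (Rlt_or_le r d) as [Hrd|Hrd].
- specialize (Hnear r ltac:(lra)).
  assert (K * root6 r <= (K + m' / root6 d + 1) * root6 r) by (apply Rmult_le_compat_r; lra).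
  lra.
- assert (Hq : root6 d <= root6 r) by (apply Rle_Rpower_l; lra).
  pose proof (Hm r Hr). pose proof (ustar_nonpos n r Hn).
  assert (m' <= m' / root6 d * root6 r).
  { apply Rle_trans with (m' / root6 d * root6 d); [right; field; lra|].
    apply Rmult_le_compat_l; lra. }
  assert (m' / root6 d * root6 r <= (K + m' / root6 d + 1) * root6 r)
    by (apply Rmult_le_compat_r; lra).
  lra.
Qed.

Theorem theorem3 (n : nat) (Rad : R) (u0 d1 : R -> R) (u : R -> R -> R) :
  (2 <= n)%nat ->
  0 < Rad ->
  Rad < sqrt (3 / 8 * (3 * INR n - 5) * (2 * INR n - 3) ^ 3) ->
  cond_C1 Rad u0 d1 -> cond_C3 n Rad u0 -> cond_C4 n u0 -> cond_C5 n Rad u0 -> cond_C6 Rad d1 ->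
  is_solution n Rad u0 u ->
  exists c mu, 0 < c /\ 0 < mu /\
    forall t, 0 <= t -> forall r, 0 <= r < Rad ->
      Rabs (u r t - ustar n r) <= c * exp (- mu * t).
Proof.
intros Hn HR _ _ HC3 HC4 _ _ Hsol.
destruct (initial_barrier n Rad u0 Hn (initial_datum_at_origin n Rad u0 u HR Hsol)
            (initial_datum_bounded_below n Rad u0 u HR Hsol) HC4) as [c [Hc Hgap]].
exists (c * root6 Rad), (decay_rate Rad).
pose proof (root6_pos Rad).
split; [apply Rmult_lt_0_compat; lra|].
split; [apply decay_rate_pos; auto|].
intros t Ht r Hr.
pose proof (solution_below_ustar n Rad u0 u Hn HR Hsol HC3 r t ltac:(lra) Ht) as Hupper.
pose proof (solution_above_barrier n Rad c u0 u Hn HR Hsol ltac:(lra) Hgap r t ltac:(lra) Ht)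
  as Hlower.
unfold barrier in Hlower.
set (E := exp (- decay_rate Rad * t)) in *.
assert (0 < E) by apply exp_pos.
assert (c * E * root6_ext r <= c * root6 Rad * E).
{ replace (c * root6 Rad * E) with (c * E * root6 Rad) by ring.
  apply Rmult_le_compat_l; [apply Rmult_le_pos; lra | apply root6_ext_le; lra]. }
rewrite Rabs_left1 by lra. lra.
Qed.
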